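(* Let $\mathcal{A}$ and $\mathcal{B}$ be tile sets with $\mathcal{B}\subseteq\mathcal{A}$ (with consistent frequencies, the frequencies of tiles in $\mathcal{B}$ being those in $\mathcal{A}$). Then \[ \mathrm{KL}(\mathcal{A}\,\|\,\mathcal{B})=\sum_{i,j}\sum_{v\in\{0,1\}}p^*_{\mathcal{A}}((i,j)=v)\log\frac{p^*_{\mathcal{A}}((i,j)=v)}{p^*_{\mathcal{B}}((i,j)=v)}. \]
   Context: Fix $n,m\ge1$; $\mathcal{D}$ is the set of $n\times m$ binary matrices. A tile is $T=(t(T),a(T))$ with nonempty row set $t(T)\subseteq\{1..n\}$ and column set $a(T)\subseteq\{1..m\}$, $\mathrm{area}(T)=t(T)\times a(T)$; $\mathrm{fr}(T;D)=\frac1{|\mathrm{area}(T)|}\sum_{(i,j)\in\mathrm{area}(T)}D(i,j)$, $\mathrm{fr}(T;p)=\sum_Dp(D)\mathrm{fr}(T;D)$, $p((i,j)=v)=\sum_{D:D(i,j)=v}p(D)$. For a tile set $\mathcal{T}$ with consistent target frequencies $\alpha_T$, $p^*_{\mathcal{T}}$ is the entropy-maximising distribution among $\{p:\mathrm{fr}(T;p)=\alpha_T\ \forall T\in\mathcal{T}\}$. $\mathrm{KL}(p\|q)=\sum_Dp(D)\log\frac{p(D)}{q(D)}$ (natural log, $0\log0=0$), and $\mathrm{KL}(\mathcal{T}\|\mathcal{U})$ means $\mathrm{KL}(p^*_{\mathcal{T}}\|p^*_{\mathcal{U}})$. *)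

From mathcomp Require Import all_boot.
From Stdlib Require Import Reals.

Set Implicit Arguments.
Unset Strict Implicit.
Unset Printing Implicit Defensive.

Definition rsum (T : finType) (P : pred T) (F : T -> R) : R :=
  \big[Rplus/0%R]_(x | P x) F x.

Section Tiles.
Variables n m : nat.

Definition bmat := {ffun 'I_n * 'I_m -> bool}.

(* a tile: (row set t(T), column set a(T)) *)
Definition tile := ({set 'I_n} * {set 'I_m})%type.
Definition tileset := {set tile}.

Definition tile_ok (T : tile) : Prop := T.1 != set0 /\ T.2 != set0.

Definition area (T : tile) : {set 'I_n * 'I_m} := setX T.1 T.2.

Definition b2R (b : bool) : R := if b then 1%R else 0%R.

Definition fr_mat (T : tile) (D : bmat) : R :=
  (/ INR #|area T| * rsum (fun c => c \in area T) (fun c => b2R (D c)))%R.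

Definition is_distr (p : bmat -> R) : Prop :=
  (forall D, 0 <= p D)%R /\ rsum predT p = 1%R.

Definition fr_distr (T : tile) (p : bmat -> R) : R :=
  rsum predT (fun D => p D * fr_mat T D)%R.

Definition feasible (A : tileset) (alpha : tile -> R) (p : bmat -> R) : Prop :=
  is_distr p /\ forall T, T \in A -> fr_distr T p = alpha T.

(* Shannon entropy, natural log; 0 log 0 = 0 holds since 0 * x = 0 *)
Definition entropy (p : bmat -> R) : R :=
  (- rsum predT (fun D => p D * ln (p D)))%R.

Definition is_maxent (A : tileset) (alpha : tile -> R) (p : bmat -> R) : Prop :=
  feasible A alpha p /\
  forall q, feasible A alpha q -> (entropy q <= entropy p)%R.

(* KL(p || q), natural log; terms with p D = 0 vanish (0 log 0 = 0) *)
Definition KL (p q : bmat -> R) : R :=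
  rsum predT (fun D => p D * ln (p D / q D))%R.

Definition cell_marg (p : bmat -> R) (c : 'I_n * 'I_m) (v : bool) : R :=
  rsum (fun D : bmat => D c == v) p.

End Tiles.

From HB Require Import structures.
From mathcomp Require Import all_boot.
From Stdlib Require Import Reals Lra.

(* The proof rests on three facts.
   1. A maximum-entropy distribution p equals the product of its cell
      marginals: the product distribution has the same cell marginals,
      hence the same tile frequencies (they are linear in the marginals), so
      it is feasible; its entropy equals the cross entropy of p against it,
      which by Gibbs' inequality is at least the entropy of p, and the
      equality case of Gibbs' inequality forces p to equal it.
   2. If p is feasible for B and q is the maximum-entropy distribution for B,
      the support of p is contained in that of q: mixing a small amount t of
      p into q gains entropy of order -t log t wherever q vanishes and p
      does not, which beats the linear loss and contradicts maximality.
   3. When both distributions are products of their marginals and the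
      supports are nested, log (pA D / pB D) is a sum over cells, so the
      KL divergence splits into the per-cell divergences of the marginals.
   Since B is a subset of A, p*_A is feasible for B, and the theorem follows. *)

Set Implicit Arguments.
Unset Strict Implicit.
Unset Printing Implicit Defensive.

Local Open Scope R_scope.

Lemma Rplus_A : associative Rplus. Proof. by move=> x y z; rewrite Rplus_assoc. Qed.
Lemma Rmult_A : associative Rmult. Proof. by move=> x y z; rewrite Rmult_assoc. Qed.
HB.instance Definition _ := Monoid.isComLaw.Build R 0 Rplus Rplus_A Rplus_comm Rplus_0_l.
HB.instance Definition _ := Monoid.isComLaw.Build R 1 Rmult Rmult_A Rmult_comm Rmult_1_l.
HB.instance Definition _ := Monoid.isMulLaw.Build R 0 Rmult Rmult_0_l Rmult_0_r.
HB.instance Definition _ :=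
  Monoid.isAddLaw.Build R Rmult Rplus Rmult_plus_distr_r Rmult_plus_distr_l.

Lemma ln_le_sub1 x : 0 < x -> ln x <= x - 1.
Proof. by move=> hx; have := exp_ineq1_le (ln x); rewrite exp_ln //; lra. Qed.

Lemma ln_lt_sub1 x : 0 < x -> x <> 1 -> ln x < x - 1.
Proof.
move=> hx h1; have lnx0 : ln x <> 0.
  by move=> h0; apply: h1; rewrite -(exp_ln x) // h0 exp_0.
by have := exp_ineq1 (ln x) lnx0; rewrite exp_ln //; lra.
Qed.

Lemma ln_div x y : 0 < x -> 0 < y -> ln (x / y) = ln x - ln y.
Proof.
by move=> hx hy; rewrite /Rdiv ln_mult ?ln_Rinv //; apply: Rinv_0_lt_compat.
Qed.

Lemma gibbs_pt x y : 0 <= x -> 0 <= y -> (0 < x -> 0 < y) ->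
  x - y <= x * ln x - x * ln y.
Proof.
move=> hx hy hxy; case: (Req_dec x 0) => [->|x0]; first lra.
have hx' : 0 < x by lra.
have hy' := hxy hx'.
have hyx : 0 < y / x by apply: Rdiv_lt_0_compat.
have := ln_le_sub1 hyx; rewrite ln_div // => hln.
have : x * (ln y - ln x) <= x * (y / x - 1) by apply: Rmult_le_compat_l; lra.
have -> : x * (y / x - 1) = y - x by field; lra.
lra.
Qed.

Lemma gibbs_pt_eq x y : 0 <= x -> 0 <= y -> (0 < x -> 0 < y) ->
  x - y = x * ln x - x * ln y -> x = y.
Proof.
move=> hx hy hxy E; case: (Req_dec x 0) => [x0|x0].
  by move: E; rewrite x0 !Rmult_0_l; lra.
have hx' : 0 < x by lra.
have hy' := hxy hx'.
have hyx : 0 < y / x by apply: Rdiv_lt_0_compat.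
case: (Req_dec (y / x) 1) => [h1|h1].
  have : y = y / x * x by field; lra.
  by rewrite h1 Rmult_1_l.
have := ln_lt_sub1 hyx h1; rewrite ln_div // => hln.
have : x * (ln y - ln x) < x * (y / x - 1) by apply: Rmult_lt_compat_l; lra.
have -> : x * (y / x - 1) = y - x by field; lra.
lra.
Qed.

Lemma xlnx_convex a b t : 0 <= a -> 0 <= b -> 0 < t < 1 ->
  ((1 - t) * b + t * a) * ln ((1 - t) * b + t * a) <=
  (1 - t) * (b * ln b) + t * (a * ln a).
Proof.
move=> ha hb ht.
have hb' : 0 <= (1 - t) * b by apply: Rmult_le_pos; lra.
have ha' : 0 <= t * a by apply: Rmult_le_pos; lra.
set s := (1 - t) * b + t * a.
case: (Req_dec s 0) => [s0|s0].
  have b0 : b = 0.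
    have : (1 - t) * b = 0 by rewrite /s in s0; lra.
    by case/Rmult_integral => //; lra.
  have a0 : a = 0.
    have : t * a = 0 by rewrite /s in s0; lra.
    by case/Rmult_integral => //; lra.
  by rewrite s0 b0 a0; lra.
have hs : 0 < s by rewrite /s in s0 *; lra.
have gb := @gibbs_pt b s hb (Rlt_le _ _ hs) (fun _ => hs).
have ga := @gibbs_pt a s ha (Rlt_le _ _ hs) (fun _ => hs).
have : (1 - t) * (b - s) <= (1 - t) * (b * ln b - b * ln s).
  by apply: Rmult_le_compat_l; lra.
have : t * (a - s) <= t * (a * ln a - a * ln s) by apply: Rmult_le_compat_l; lra.
rewrite /s; lra.
Qed.

Section Sums.
Variable T : finType.
Implicit Types (P : pred T) (F G : T -> R).

Lemma rsumD P F G : rsum P (fun x => F x + G x) = rsum P F + rsum P G.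
Proof. by rewrite /rsum big_split. Qed.

Lemma rsumZ P a F : rsum P (fun x => a * F x) = a * rsum P F.
Proof. by rewrite /rsum big_distrr. Qed.

Lemma rsum_ext P F G : (forall x, P x -> F x = G x) -> rsum P F = rsum P G.
Proof. by move=> h; rewrite /rsum; apply: eq_bigr. Qed.

Lemma rsumB P F G : rsum P (fun x => F x - G x) = rsum P F - rsum P G.
Proof.
rewrite (@rsum_ext P _ (fun x => F x + -1 * G x)); last by move=> x _; ring.
by rewrite rsumD rsumZ; ring.
Qed.

Lemma rsum_ge0 P F : (forall x, P x -> 0 <= F x) -> 0 <= rsum P F.
Proof.
move=> h; apply: (big_ind (fun x => 0 <= x)) => //; first lra.
by move=> a b ha hb; lra.
Qed.

Lemma rsum_ge_term P F x : (forall y, P y -> 0 <= F y) -> P x -> F x <= rsum P F.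
Proof.
move=> h hx; rewrite /rsum (bigD1 x) //=.
have : 0 <= rsum (fun y => P y && (y != x)) F.
  by apply: rsum_ge0 => y /andP [hy _]; apply: h.
rewrite /rsum; lra.
Qed.

Lemma gibbs_eq (p q : T -> R) :
  (forall x, 0 <= p x) -> (forall x, 0 <= q x) -> (forall x, 0 < p x -> 0 < q x) ->
  rsum predT p = rsum predT q ->
  rsum predT (fun x => p x * ln (p x)) <= rsum predT (fun x => p x * ln (q x)) ->
  forall x, p x = q x.
Proof.
move=> p0 q0 pq mass cross x.
pose d y := (p y * ln (p y) - p y * ln (q y)) - (p y - q y).
have d0 y : predT y -> 0 <= d y.
  by move=> _; have := gibbs_pt (p0 y) (q0 y) (pq y); rewrite /d => ?; lra.
have dsum : rsum predT d <= 0 by rewrite /d !rsumB mass; lra.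
have dx0 : d x = 0 by have := rsum_ge_term d0 (x := x) isT; have := d0 x isT; lra.
by apply: (gibbs_pt_eq (p0 x) (q0 x) (pq x)); rewrite /d in dx0; lra.
Qed.

End Sums.

Section Marginals.
Variables n m : nat.
Local Notation cell := ('I_n * 'I_m)%type.
Local Notation mat := (bmat n m).
Implicit Types (p q : mat -> R) (D : mat) (c : cell).

Lemma sum_cell_marg p c (F : bool -> R) :
  rsum predT (fun D => p D * F (D c)) = rsum predT (fun v => cell_marg p c v * F v).
Proof.
rewrite /rsum /cell_marg /rsum big_bool /= !big_distrl /=.
rewrite (bigID (fun D : mat => D c)) /=; congr (_ + _).
  by apply: eq_big => [D|D /= ->] //; case: (D c).
by apply: eq_big => [D|D /= /negbTE ->] //; case: (D c).
Qed.

Lemma cell_marg_mass p c : cell_marg p c true + cell_marg p c false = rsum predT p.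
Proof.
have := sum_cell_marg p c (fun _ => 1).
rewrite /rsum big_bool /= !Rmult_1_r => <-.
by apply: eq_bigr => D _; rewrite Rmult_1_r.
Qed.

Lemma cell_marg_ge p c D : (forall D, 0 <= p D) -> p D <= cell_marg p c (D c).
Proof. by move=> h; apply: rsum_ge_term => //; rewrite eqxx. Qed.

Lemma cell_marg_ge0 p c v : (forall D, 0 <= p D) -> 0 <= cell_marg p c v.
Proof. by move=> h; apply: rsum_ge0. Qed.

Lemma cell_marg_gt0 p D c : (forall D, 0 <= p D) -> 0 < p D -> 0 < cell_marg p c (D c).
Proof. by move=> h hD; apply: Rlt_le_trans hD (cell_marg_ge _ _ h). Qed.

Definition marg_prod p D : R := \big[Rmult/1]_c cell_marg p c (D c).

Lemma prod_ge0 (F : cell -> R) : (forall c, 0 <= F c) -> 0 <= \big[Rmult/1]_c F c.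
Proof.
move=> h; apply: (big_ind (fun x => 0 <= x)) => //; first lra.
by move=> a b ha hb; apply: Rmult_le_pos.
Qed.

Lemma prod_gt0 (F : cell -> R) : (forall c, 0 < F c) -> 0 < \big[Rmult/1]_c F c.
Proof.
move=> h; apply: (big_ind (fun x => 0 < x)) => //; first lra.
by move=> a b ha hb; apply: Rmult_lt_0_compat.
Qed.

Lemma ln_prod (F : cell -> R) : (forall c, 0 < F c) ->
  ln (\big[Rmult/1]_c F c) = rsum predT (fun c => ln (F c)).
Proof.
move=> h; suff [] : 0 < \big[Rmult/1]_c F c /\
                    ln (\big[Rmult/1]_c F c) = rsum predT (fun c => ln (F c)) by [].
apply: (big_rec2 (fun x y => 0 < x /\ ln x = y)) => [|c x y _ [hx <-]].
  by split; [lra | exact: ln_1].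
by split; [apply: Rmult_lt_0_compat | rewrite ln_mult].
Qed.

Lemma sum_prod (F : cell -> bool -> R) :
  rsum predT (fun D : mat => \big[Rmult/1]_c F c (D c)) =
  \big[Rmult/1]_c (F c true + F c false).
Proof.
rewrite /rsum -(@bigA_distr_bigA R 0 1 Rmult Rplus cell bool F).
by apply: eq_bigr => c _; rewrite big_bool.
Qed.

Lemma marg_prod_marg p c v : is_distr p -> cell_marg (marg_prod p) c v = cell_marg p c v.
Proof.
move=> [_ p1].
pose F i w := if i == c then (if w == v then cell_marg p i w else 0)
              else cell_marg p i w.
transitivity (rsum predT (fun D : mat => \big[Rmult/1]_i F i (D i))).
  rewrite /cell_marg /rsum /marg_prod (big_mkcond (fun D : mat => D c == v)) /=.
  apply: eq_bigr => D _; rewrite (bigD1 c) //= [in RHS](bigD1 c) //= /F eqxx.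
  case: eqP => _; last by rewrite Rmult_0_l.
  by congr (_ * _); apply: eq_bigr => i /negbTE ->.
rewrite sum_prod (bigD1 c) //= /F eqxx.
rewrite (eq_bigr (fun _ => 1)); last by move=> i /negbTE ->; rewrite cell_marg_mass.
by rewrite big1_eq Rmult_1_r; clear F; case: v => /=; lra.
Qed.

Lemma marg_prod_distr p : is_distr p -> is_distr (marg_prod p).
Proof.
move=> [p0 p1]; split=> [D|]; first by apply: prod_ge0 => c; apply: cell_marg_ge0.
rewrite /marg_prod sum_prod (eq_bigr (fun _ => 1)) ?big1_eq // => c _.
by rewrite cell_marg_mass.
Qed.

Lemma fr_distr_marg (T : tile n m) q :
  fr_distr T q = / INR #|area T| * rsum (fun c => c \in area T) (fun c => cell_marg q c true).
Proof.
rewrite /fr_distr /fr_mat.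
rewrite (@rsum_ext _ _ _ (fun D => / INR #|area T| *
   rsum (fun c => c \in area T) (fun c => q D * b2R (D c)))); last first.
  by move=> D _; rewrite rsumZ; set S := rsum _ _; ring.
rewrite rsumZ; congr (_ * _).
rewrite /rsum exchange_big /=; apply: eq_bigr => c _.
have := sum_cell_marg q c b2R; rewrite /rsum => ->.
by rewrite big_bool /= /b2R; ring.
Qed.

Lemma marg_prod_feasible X alpha p : feasible X alpha p -> feasible X alpha (marg_prod p).
Proof.
move=> [pd pfr]; split; first exact: marg_prod_distr.
move=> T hT; rewrite -(pfr T hT) !fr_distr_marg; congr (_ * _).
by apply: rsum_ext => c _; rewrite marg_prod_marg.
Qed.

Lemma sum_ln_cells p (h : mat -> R) (f : cell -> bool -> R) : (forall D, 0 <= p D) ->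
  (forall D, 0 < p D -> ln (h D) = rsum predT (fun c => f c (D c))) ->
  rsum predT (fun D => p D * ln (h D)) =
  rsum predT (fun c => rsum predT (fun v => cell_marg p c v * f c v)).
Proof.
move=> p0 hl.
rewrite (@rsum_ext _ _ _ (fun D => rsum predT (fun c => p D * f c (D c)))); last first.
  move=> D _; case: (Rle_lt_or_eq_dec _ _ (p0 D)) => [hD|<-].
    by rewrite hl // -rsumZ.
  by rewrite Rmult_0_l /rsum big1 // => c _; ring.
rewrite /rsum exchange_big; apply: eq_bigr => c _.
exact: (sum_cell_marg p c (f c)).
Qed.

(* Cross entropy of p against its product of marginals equals the
   (negative) entropy of that product: both are sums of marginal terms. *)
Lemma cross_entropy_marg_prod p : is_distr p ->
  rsum predT (fun D => p D * ln (marg_prod p D)) =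
  rsum predT (fun D => marg_prod p D * ln (marg_prod p D)).
Proof.
move=> pd; have [p0 _] := pd; have [q0 _] := marg_prod_distr pd.
pose f c v := ln (cell_marg p c v).
rewrite (@sum_ln_cells p _ f) // => [|D hD]; last first.
  by rewrite /marg_prod ln_prod // => c; apply: cell_marg_gt0.
rewrite (@sum_ln_cells _ _ f) // => [|D hD]; last first.
  rewrite /marg_prod ln_prod // => c; rewrite -(marg_prod_marg _ _ pd).
  exact: cell_marg_gt0.
by apply: rsum_ext => c _; apply: rsum_ext => v _; rewrite marg_prod_marg.
Qed.

Lemma maxent_marg_prod X alpha p : is_maxent X alpha p -> forall D, p D = marg_prod p D.
Proof.
move=> [pf pmax]; have [pd _] := pf; have [p0 p1] := pd.
have [q0 q1] := marg_prod_distr pd.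
apply: gibbs_eq => //.
- by move=> D hD; apply: prod_gt0 => c; apply: cell_marg_gt0.
- by rewrite p1 q1.
- rewrite cross_entropy_marg_prod //.
  by apply: Ropp_le_cancel; exact: (pmax _ (marg_prod_feasible pf)).
Qed.

Definition mix (t : R) p q D : R := (1 - t) * q D + t * p D.

Lemma mix_feasible X alpha t p q : 0 < t < 1 ->
  feasible X alpha p -> feasible X alpha q -> feasible X alpha (mix t p q).
Proof.
move=> ht [[p0 p1] pfr] [[q0 q1] qfr]; split; first split.
- move=> D; apply: Rplus_le_le_0_compat; apply: Rmult_le_pos;
    [lra | exact: q0 | lra | exact: p0].
- by rewrite /mix rsumD !rsumZ p1 q1; ring.
move=> T hT; rewrite /fr_distr /mix.
rewrite (@rsum_ext _ _ _ (fun D => (1 - t) * (q D * fr_mat T D) + t * (p D * fr_mat T D)));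
  last by move=> D _; ring.
by rewrite rsumD !rsumZ; have := pfr T hT; have := qfr T hT; rewrite /fr_distr => -> ->; ring.
Qed.

Lemma entropy_mix_gain t p q D0 : (forall D, 0 <= p D) -> (forall D, 0 <= q D) ->
  0 < t < 1 -> q D0 = 0 -> 0 < p D0 ->
  (1 - t) * entropy q + t * entropy p - t * p D0 * ln t <= entropy (mix t p q).
Proof.
move=> p0 q0 ht qD0 pD0.
pose gap D := (1 - t) * (q D * ln (q D)) + t * (p D * ln (p D))
              - mix t p q D * ln (mix t p q D).
have gap0 D : predT D -> 0 <= gap D.
  by move=> _; have := xlnx_convex (p0 D) (q0 D) ht; rewrite /gap /mix; lra.
have gapD0 : gap D0 = - t * p D0 * ln t.
  rewrite /gap /mix qD0 Rmult_0_r Rplus_0_l Rmult_0_l Rmult_0_r ln_mult //; [ring | lra].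
have := rsum_ge_term gap0 (x := D0) isT.
rewrite gapD0 /gap rsumB rsumD !rsumZ /entropy.
set Sp := rsum predT (fun D : mat => p D * ln (p D)).
set Sq := rsum predT (fun D : mat => q D * ln (q D)).
set Smix := rsum predT (fun D : mat => mix t p q D * ln (mix t p q D)).
lra.
Qed.

Lemma maxent_support Y alpha q p : is_maxent Y alpha q -> feasible Y alpha p ->
  forall D, 0 < p D -> 0 < q D.
Proof.
move=> [qf qmax] pf D0 pD0; have [[q0 _] _] := qf; have [[p0 _] _] := pf.
case: (Rlt_le_dec 0 (q D0)) => // qle; have qD0 : q D0 = 0 by have := q0 D0; lra.
exfalso.
set K := entropy p - entropy q.
set t := exp (- (1 + Rabs K / p D0)).
have lnt : p D0 * ln t = - p D0 - Rabs K by rewrite /t ln_exp; field; lra.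
have ht : 0 < t < 1.
  split; first exact: exp_pos.
  rewrite /t -[X in _ < X]exp_0; apply: exp_increasing.
  have : 0 <= Rabs K / p D0.
    by apply: Rmult_le_pos; [apply: Rabs_pos | apply/Rlt_le/Rinv_0_lt_compat].
  lra.
have gain := entropy_mix_gain p0 q0 ht qD0 pD0.
have loss := qmax _ (mix_feasible ht pf qf).
have net_gain : 0 < t * (K - p D0 * ln t).
  apply: Rmult_lt_0_compat; first lra.
  by rewrite lnt; have := Rle_abs (- K); rewrite Rabs_Ropp; lra.
by rewrite /K in net_gain; nra.
Qed.

Lemma KL_marg_prod p q : is_distr p -> is_distr q ->
  (forall D, p D = marg_prod p D) -> (forall D, q D = marg_prod q D) ->
  (forall D, 0 < p D -> 0 < q D) ->
  KL p q = rsum predT (fun c => rsum predT (fun v =>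
             cell_marg p c v * ln (cell_marg p c v / cell_marg q c v))).
Proof.
move=> [p0 _] [q0 _] pprod qprod pq; rewrite /KL; apply: sum_ln_cells => // D hD.
have hqD := pq D hD.
have pc c : 0 < cell_marg p c (D c) by apply: cell_marg_gt0.
have qc c : 0 < cell_marg q c (D c) by apply: cell_marg_gt0.
rewrite ln_div // {1}pprod {1}qprod /marg_prod !ln_prod // -rsumB.
by apply: rsum_ext => c _; rewrite ln_div.
Qed.

End Marginals.

Local Close Scope R_scope.

Theorem theorem4 (n m : nat) (Hn : (1 <= n)%N) (Hm : (1 <= m)%N)
  (A B : tileset n m) (alpha : tile n m -> R)
  (HA : forall T, T \in A -> tile_ok T)
  (HBA : B \subset A)
  (Hcons : exists p, feasible A alpha p)
  (pA pB : bmat n m -> R)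
  (HpA : is_maxent A alpha pA)
  (HpB : is_maxent B alpha pB) :
  KL pA pB =
  rsum predT (fun c : 'I_n * 'I_m =>
    rsum predT (fun v : bool =>
      (cell_marg pA c v * ln (cell_marg pA c v / cell_marg pB c v))%R)).
Proof.
have [[pAd pAfr] _] := HpA; have [[pBd _] _] := HpB.
have pA_feasible_B : feasible B alpha pA.
  by split=> // T hT; apply: pAfr; apply: (subsetP HBA).
apply: KL_marg_prod => //.
- exact: maxent_marg_prod HpA.
- exact: maxent_marg_prod HpB.
- exact: maxent_support HpB pA_feasible_B.
Qed.
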